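(* Let $k\geq 2$ and $n>5k^{2}$ be integers. Then \[ n+2k-2-\frac{2(k^{2}-k)}{n+2k+2}>q\left(S_{n,k}^{+}\right)>q\left(S_{n,k}\right)>n+2k-2-\frac{2(k^{2}-k)}{n+2k-3}. \]
   Context: All graphs are finite and simple. For a graph $G$, the signless Laplacian is $Q(G)=D(G)+A(G)$, where $D(G)$ is the diagonal matrix of vertex degrees and $A(G)$ is the adjacency matrix; $q(G)$ denotes the largest eigenvalue of $Q(G)$. $S_{n,k}=K_{k}\vee\overline{K}_{n-k}$ is the graph of order $n$ obtained by joining every vertex of a complete graph on $k$ vertices to every vertex of an independent set of $n-k$ vertices. $S_{n,k}^{+}$ is the graph obtained from $S_{n,k}$ by adding one edge (necessarily joining two vertices of the independent set of size $n-k$). *)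

From HB Require Import structures.
From mathcomp Require Import all_boot all_order all_algebra.
Set Implicit Arguments. Unset Strict Implicit. Unset Printing Implicit Defensive.
Import Order.TTheory GRing.Theory Num.Theory.
Local Open Scope ring_scope.

(* A simple graph on vertex set 'I_n is given by an adjacency relation
   (assumed symmetric and irreflexive; all relations below are). *)

Definition deg (n : nat) (e : rel 'I_n) (i : 'I_n) : nat := #|[set j | e i j]|.

Definition signless_laplacian (R : nzRingType) (n : nat) (e : rel 'I_n)
  : 'M[R]_n :=
  \matrix_(i, j) ((deg e i)%:R *+ (i == j) + (e i j)%:R).

Definition is_largest_eigenvalue (R : realFieldType) (n : nat) (A : 'M[R]_n)
  (x : R) : Prop :=
  eigenvalue A x /\ (forall y : R, eigenvalue A y -> y <= x).

(* S_{n,k} = K_k \/ complement(K_{n-k}): vertices 0..k-1 form the clique,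
   vertices k..n-1 the independent set. *)
Definition S_adj (n : nat) (k : nat) : rel 'I_n :=
  fun i j => (i != j) && (((i : nat) < k)%N || ((j : nat) < k)%N).

Definition Splus_adj (n k : nat) : rel 'I_n :=
  fun i j => @S_adj n k i j ||
    ((((i : nat) == k) && ((j : nat) == k.+1)) ||
     (((i : nat) == k.+1) && ((j : nat) == k))).
Arguments S_adj n k : clear implicits.
Arguments Splus_adj n k : clear implicits.

From HB Require Import structures.
From mathcomp Require Import all_boot all_order all_algebra.
From mathcomp Require Import ring lra zify.
Set Implicit Arguments. Unset Strict Implicit. Unset Printing Implicit Defensive.
Import Order.TTheory GRing.Theory Num.Theory.
Local Open Scope ring_scope.

(* Both Q(S_{n,k}) and Q(S_{n,k}^+) are nonnegative
   matrices, so by a Perron-Frobenius type argument any eigenvalue with an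
   entrywise positive eigenvector is the largest eigenvalue.  We exhibit such
   eigenvectors explicitly, constant on the natural blocks of vertices:
   - for S_{n,k} (blocks: clique, independent set) the eigenvalue q must be a
     root of  charS(x) = (x - (N+K-2))(x - K) - K(N-K);
   - for S_{n,k}^+ (blocks: clique, the two ends of the new edge, the rest)
     the eigenvalue must be a root of  charSplus(x) = (x-K-2) charS(x) - 4K.
   An elementary real estimate shows charS < 0 at the lower bound L of the
   statement, charS > 0 and charSplus > 0 at its upper bound U.  The
   intermediate value theorem for polynomials then gives a root q of charS in
   (L, U), and since charSplus(q) = -4K < 0 a root q+ of charSplus in (q, U);
   these are the two spectral radii, and L < q < q+ < U. *)

(* A nonnegative matrix with a positive left eigenvector for q has no
   eigenvalue larger than q: compare the eigen-equation of any eigenvector v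
   with that of x at a coordinate maximising |v_i| / x_i. *)
Lemma eigenvalue_le_of_pos_eigenvector (R : realFieldType) n (A : 'M[R]_n)
    (x : 'rV[R]_n) (q y : R) :
  (forall i j, 0 <= A i j) -> (forall i, 0 < x 0 i) -> x *m A = q *: x ->
  eigenvalue A y -> y <= q.
Proof.
move=> A_ge0 x_gt0 Ax /eigenvalueP [v Av v_neq0].
have [i1 vi1] : exists i, v 0 i != 0.
  apply/existsP; apply: contraR v_neq0; rewrite negb_exists => /forallP v0.
  by apply/eqP/rowP => i; rewrite mxE; move: (v0 i); rewrite negbK => /eqP.
pose ratio i := `|v 0 i| / x 0 i.
have [j _ ratio_max] := @arg_maxP _ _ _ i1 xpredT ratio isT.
set c := ratio j in ratio_max.
have v_le i : `|v 0 i| <= c * x 0 i.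
  by have := ratio_max i isT; rewrite /= /ratio ler_pdivrMr // mulrC.
have c_gt0 : 0 < c.
  by apply: lt_le_trans (ratio_max i1 isT); rewrite /ratio divr_gt0 ?normr_gt0.
have vj : `|v 0 j| = c * x 0 j by rewrite /c /ratio mulrVK // unitfE gt_eqF.
have coord (w : 'rV[R]_n) (s : R) : w *m A = s *: w ->
    s * w 0 j = \sum_i w 0 i * A i j.
  by move=> wA; have := congr1 (fun M : 'M[R]_(1, n) => M 0 j) wA; rewrite !mxE.
have cx_gt0 : 0 < c * x 0 j by rewrite mulr_gt0.
have : `|y| * (c * x 0 j) <= q * (c * x 0 j).
  rewrite -{1}vj -normrM (coord _ _ Av).
  apply: le_trans (ler_norm_sum _ _ _) _.
  apply: (@le_trans _ _ (\sum_i c * (x 0 i * A i j))).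
    apply: ler_sum => i _; rewrite normrM (ger0_norm (A_ge0 _ _)) mulrA.
    by apply: ler_wpM2r; [exact: A_ge0 | exact: v_le].
  by rewrite -mulr_sumr -(coord _ _ Ax) mulrCA.
rewrite ler_pM2r // => y_le.
exact: le_trans (ler_norm y) y_le.
Qed.

Lemma largest_eigenvalue_of_pos_eigenvector (R : realFieldType) n
    (A : 'M[R]_n) (X : nat -> R) (q : R) :
  (0 < n)%N -> (forall i j, 0 <= A i j) -> (forall i, 0 < X i) ->
  (\row_(i < n) X i) *m A = q *: \row_(i < n) X i -> is_largest_eigenvalue A q.
Proof.
move=> n_gt0 A_ge0 X_gt0 AX; split.
  apply/eigenvalueP; exists (\row_(i < n) X i) => //.
  apply/negP => /eqP X0.
  have := congr1 (fun M : 'M[R]_(1, n) => M 0 (Ordinal n_gt0)) X0.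
  by rewrite !mxE => X00; have := X_gt0 0%N; rewrite X00 ltxx.
by move=> y; apply: eigenvalue_le_of_pos_eigenvector AX => // i; rewrite mxE.
Qed.

Lemma signless_laplacian_ge0 (R : realFieldType) n (e : rel 'I_n) i j :
  0 <= signless_laplacian R e i j.
Proof. by rewrite mxE addr_ge0 ?mulrn_wge0 ?ler0n. Qed.

Lemma deg_sum (R : nzRingType) n (e : rel 'I_n) j :
  (deg e j)%:R = \sum_i (e j i)%:R :> R.
Proof.
rewrite /deg -sum1_card natr_sum big_mkcond; apply: eq_bigr => i _.
by rewrite inE; case: (e j i).
Qed.

(* For a symmetric relation, (X Q)_j = sum over neighbours i of j of
   (X_j + X_i): each edge ij contributes X_j through D and X_i through A. *)
Lemma row_mul_signless_laplacian (R : realFieldType) n (e : rel 'I_n)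
    (X : nat -> R) j :
  (forall i j, e i j = e j i) ->
  ((\row_(i < n) X i) *m signless_laplacian R e) 0 j
    = \sum_(i < n) (X j + X i) * (e i j)%:R.
Proof.
move=> e_sym; rewrite mxE.
rewrite (eq_bigr (fun i : 'I_n => X i * (deg e i)%:R *+ (i == j) + X i * (e i j)%:R));
  last by move=> i _; rewrite !mxE mulrDr -mulrnAr.
rewrite big_split /= (bigD1 j) //= eqxx big1 ?addr0; last first.
  by move=> i /negbTE ->; rewrite mulr0n.
rewrite deg_sum mulr_sumr -big_split /=; apply: eq_bigr => i _.
by rewrite e_sym mulrDl.
Qed.

Lemma sum_nat_const_block (R : nzRingType) (G : nat -> R) (a b : nat) (c : R) :
  (a <= b)%N -> (forall i, (a <= i < b)%N -> G i = c) ->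
  \sum_(a <= i < b) G i = c * (b%:R - a%:R).
Proof.
by move=> ab Gc; rewrite (eq_big_nat _ _ Gc) sumr_const_nat -natrB // mulr_natr.
Qed.

(* The adjacency relations of S_{n,k} and S_{n,k}^+ read on natural-number
   indices (they agree with S_adj and Splus_adj by conversion); sums over
   vertices are then split into nat ranges of consecutive vertices. *)
Definition S_adj_nat (k i j : nat) : bool := (i != j) && ((i < k)%N || (j < k)%N).

Definition Splus_adj_nat (k i j : nat) : bool := S_adj_nat k i j ||
  (((i == k) && (j == k.+1)) || ((i == k.+1) && (j == k))).

Lemma S_adj_nat_sym k i j : S_adj_nat k i j = S_adj_nat k j i.
Proof. by rewrite /S_adj_nat eq_sym orbC. Qed.

Lemma Splus_adj_nat_sym k i j : Splus_adj_nat k i j = Splus_adj_nat k j i.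
Proof.
rewrite /Splus_adj_nat S_adj_nat_sym; congr (_ || _).
by rewrite orbC [(j == k) && _]andbC [(j == k.+1) && _]andbC.
Qed.

Lemma row_mul_signless_laplacian_nat (R : realFieldType) n (e : rel 'I_n)
    (E : nat -> nat -> bool) (X : nat -> R) j :
  (forall i j : 'I_n, e i j = E i j) -> (forall i j, E i j = E j i) ->
  ((\row_(i < n) X i) *m signless_laplacian R e) 0 j
    = \sum_(0 <= i < n) (X j + X i) * (E i j)%:R.
Proof.
move=> eE E_sym; rewrite row_mul_signless_laplacian; last first.
  by move=> i i'; rewrite !eE E_sym.
rewrite (eq_bigr (fun i : 'I_n => (X j + X i) * (E i j)%:R)); last first.
  by move=> i _; rewrite eE.
by rewrite -(big_mkord xpredT (fun i => (X j + X i) * (E i j)%:R)).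
Qed.

Section Eigenvectors.
Variable R : realFieldType.

(* The polynomial whose roots are the eigenvalues of Q(S_{n,k}) carried by
   block-constant vectors, and its analogue for Q(S_{n,k}^+). *)
Definition charS (N K : R) : {poly R} :=
  ('X - (N + K - 2)%:P) * ('X - K%:P) - (K * (N - K))%:P.

Definition charSplus (N K : R) : {poly R} :=
  ('X - (K + 2)%:P) * charS N K - (4 * K)%:P.

Lemma charS_horner (N K x : R) :
  (charS N K).[x] = (x - (N + K - 2)) * (x - K) - K * (N - K).
Proof. by rewrite /charS !hornerE. Qed.

Lemma charSplus_horner (N K x : R) :
  (charSplus N K).[x] = (x - K - 2) * (charS N K).[x] - 4 * K.
Proof.
rewrite /charSplus hornerD hornerN hornerC hornerM hornerXsubC.
by congr (_ * _ - _); ring.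
Qed.

Definition S_vec (k : nat) (q : R) (i : nat) : R :=
  if (i < k)%N then 1 else k%:R / (q - k%:R).

Definition Splus_vec (k : nat) (q : R) (i : nat) : R :=
  if (i < k)%N then 1
  else if (i < k.+2)%N then k%:R / (q - k%:R - 2) else k%:R / (q - k%:R).

Ltac decide_nat_tests := repeat match goal with
  | |- context [ leq ?x ?y ] =>
      first [ have -> : leq x y = true by lia | have -> : leq x y = false by lia ]
  | |- context [ (?x == ?y :> nat) ] =>
      first [ have -> : (x == y) = true by lia | have -> : (x == y) = false by lia ]
  end.

Ltac unfold_blocks := unfold S_vec, Splus_vec, Splus_adj_nat, S_adj_nat.

Ltac const_on_block :=
  let i := fresh "i" in let lo := fresh "lo" in let hi := fresh "hi" in
  move=> i /andP[lo hi]; unfold_blocks; decide_nat_tests => /=;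
  rewrite ?andbF ?andFb ?orbF ?orFb /=; ring.

Lemma S_eigenvector n k (q : R) : (k < n)%N -> q != k%:R ->
  (charS n%:R k%:R).[q] = 0 ->
  (\row_(i < n) S_vec k q i) *m signless_laplacian R (S_adj n k)
    = q *: \row_(i < n) S_vec k q i.
Proof.
move=> kn qk; rewrite charS_horner => /eqP; rewrite subr_eq0 => /eqP charq.
have qk0 : q - k%:R != 0 by rewrite subr_eq0.
apply/rowP => j; rewrite (@row_mul_signless_laplacian_nat _ _ _ (S_adj_nat k)) //;
  last exact: S_adj_nat_sym.
rewrite !mxE.
have jn := ltn_ord j.
have [jk|jk] := ltnP j k.
  rewrite (@big_cat_nat _ _ _ j 0 n); [|lia|lia].
  rewrite (@big_cat_nat _ _ _ j.+1 j n); [|lia|lia].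
  rewrite (@big_cat_nat _ _ _ k j.+1 n); [|lia|lia].
  rewrite big_nat1.
  rewrite (@sum_nat_const_block _ _ 0 j 2); [|lia|const_on_block].
  rewrite (@sum_nat_const_block _ _ j.+1 k 2); [|lia|const_on_block].
  rewrite (@sum_nat_const_block _ _ k n (1 + k%:R / (q - k%:R)));
    [|lia|const_on_block].
  unfold_blocks; decide_nat_tests => /=.
  rewrite -[j.+1]addn1 natrD.
  apply/eqP; rewrite -subr_eq0; apply/eqP.
  transitivity ((k%:R * (n%:R - k%:R) - (q - (n%:R + k%:R - 2)) * (q - k%:R))
                / (q - k%:R)); first by field.
  by rewrite charq subrr mul0r.
rewrite (@big_cat_nat _ _ _ k 0 n); [|lia|lia].
rewrite (@sum_nat_const_block _ _ 0 k (k%:R / (q - k%:R) + 1));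
  [|lia|const_on_block].
rewrite (@sum_nat_const_block _ _ k n 0); [|lia|const_on_block].
by unfold_blocks; decide_nat_tests => /=; field.
Qed.

Lemma Splus_eigenvector n k (q : R) : (k.+2 < n)%N ->
  q != k%:R -> q != k%:R + 2 -> (charSplus n%:R k%:R).[q] = 0 ->
  (\row_(i < n) Splus_vec k q i) *m signless_laplacian R (Splus_adj n k)
    = q *: \row_(i < n) Splus_vec k q i.
Proof.
move=> kn qk qk2; rewrite charSplus_horner charS_horner => /eqP.
rewrite subr_eq0 => /eqP charq.
have qk0 : q - k%:R != 0 by rewrite subr_eq0.
have qk20 : q - k%:R - 2 != 0 by rewrite -addrA -opprD subr_eq0.
apply/rowP => j; rewrite (@row_mul_signless_laplacian_nat _ _ _ (Splus_adj_nat k)) //;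
  last exact: Splus_adj_nat_sym.
rewrite !mxE.
have jn := ltn_ord j.
have [jk|jk] := ltnP j k.
  rewrite (@big_cat_nat _ _ _ j 0 n); [|lia|lia].
  rewrite (@big_cat_nat _ _ _ j.+1 j n); [|lia|lia].
  rewrite (@big_cat_nat _ _ _ k j.+1 n); [|lia|lia].
  rewrite (@big_cat_nat _ _ _ k.+2 k n); [|lia|lia].
  rewrite big_nat1.
  rewrite (@sum_nat_const_block _ _ 0 j 2); [|lia|const_on_block].
  rewrite (@sum_nat_const_block _ _ j.+1 k 2); [|lia|const_on_block].
  rewrite (@sum_nat_const_block _ _ k k.+2 (1 + k%:R / (q - k%:R - 2)));
    [|lia|const_on_block].
  rewrite (@sum_nat_const_block _ _ k.+2 n (1 + k%:R / (q - k%:R)));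
    [|lia|const_on_block].
  unfold_blocks; decide_nat_tests => /=.
  rewrite -[j.+1]addn1 -[k.+2]addn2 !natrD.
  apply/eqP; rewrite -subr_eq0; apply/eqP.
  transitivity ((4 * k%:R - (q - k%:R - 2) * ((q - (n%:R + k%:R - 2))
       * (q - k%:R) - k%:R * (n%:R - k%:R))) / ((q - k%:R - 2) * (q - k%:R))).
    by field; rewrite qk0 qk20.
  by rewrite -[in 4 * _]charq subrr mul0r.
have [jk2|jk2] := ltnP j k.+2.
  rewrite (@big_cat_nat _ _ _ k 0 n); [|lia|lia].
  rewrite (@big_cat_nat _ _ _ k.+1 k n); [|lia|lia].
  rewrite (@big_cat_nat _ _ _ k.+2 k.+1 n); [|lia|lia].
  rewrite !big_nat1.
  rewrite (@sum_nat_const_block _ _ 0 k (k%:R / (q - k%:R - 2) + 1));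
    [|lia|const_on_block].
  rewrite (@sum_nat_const_block _ _ k.+2 n 0); [|lia|const_on_block].
  have j_end : (j : nat) = k \/ (j : nat) = k.+1 by lia.
  by case: j_end => jE; unfold_blocks;
    decide_nat_tests => /=; field.
rewrite (@big_cat_nat _ _ _ k 0 n); [|lia|lia].
rewrite (@sum_nat_const_block _ _ 0 k (k%:R / (q - k%:R) + 1));
  [|lia|const_on_block].
rewrite (@sum_nat_const_block _ _ k n 0); [|lia|const_on_block].
by unfold_blocks; decide_nat_tests => /=; field.
Qed.

(* Every root q > K of charS is the signless Laplacian spectral radius of
   S_{n,k} (k >= 1), since S_vec is then positive. *)
Lemma S_largest_eigenvalue n k (q : R) : (0 < k)%N -> (k < n)%N -> k%:R < q ->
  (charS n%:R k%:R).[q] = 0 ->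
  is_largest_eigenvalue (signless_laplacian R (S_adj n k)) q.
Proof.
move=> k_gt0 kn kq charq.
have K_gt0 : 0 < k%:R :> R by rewrite ltr0n.
have qk_gt0 : 0 < q - k%:R by rewrite subr_gt0.
have qk : q != k%:R by rewrite gt_eqF.
apply: (largest_eigenvalue_of_pos_eigenvector _ (@signless_laplacian_ge0 R n _)
  _ (S_eigenvector kn qk charq)).
- exact: leq_ltn_trans kn.
- by move=> i; rewrite /S_vec; case: ifP => _; [exact: ltr01 | exact: divr_gt0].
Qed.

(* Every root q > K + 2 of charSplus is the signless Laplacian spectral
   radius of S_{n,k}^+ (k >= 1), since Splus_vec is then positive. *)
Lemma Splus_largest_eigenvalue n k (q : R) : (0 < k)%N -> (k.+2 < n)%N ->
  k%:R + 2 < q -> (charSplus n%:R k%:R).[q] = 0 ->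
  is_largest_eigenvalue (signless_laplacian R (Splus_adj n k)) q.
Proof.
move=> k_gt0 kn kq charq.
have K_gt0 : 0 < k%:R :> R by rewrite ltr0n.
have qk_gt0 : 0 < q - k%:R by lra.
have qk2_gt0 : 0 < q - k%:R - 2 by lra.
have qk : q != k%:R by rewrite gt_eqF // -subr_gt0.
have qk2 : q != k%:R + 2 by rewrite gt_eqF.
apply: (largest_eigenvalue_of_pos_eigenvector _ (@signless_laplacian_ge0 R n _)
  _ (Splus_eigenvector kn qk qk2 charq)).
- exact: leq_ltn_trans kn.
- move=> i; rewrite /Splus_vec; case: ifP => _; first exact: ltr01.
  by case: ifP => _; exact: divr_gt0.
Qed.

End Eigenvectors.

Section Estimates.
Variable R : realFieldType.

Definition lower_bound (N K : R) : R :=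
  N + 2 * K - 2 - 2 * (K ^+ 2 - K) / (N + 2 * K - 3).

Definition upper_bound (N K : R) : R :=
  N + 2 * K - 2 - 2 * (K ^+ 2 - K) / (N + 2 * K + 2).

(* The form in which K >= 2 enters the linear-arithmetic estimates below. *)
Lemma double_le_sqr (K : R) : 2 <= K -> 2 * K <= K ^+ 2.
Proof. by move=> K_ge2; rewrite expr2 ler_pM2r // (lt_le_trans _ K_ge2). Qed.

(* With t = 2(K^2-K)/(N+2K-3) in (0,1), the lower bound is N+2K-2-t and
   charS takes there the negative value t^2 - t. *)
Lemma lower_bound_facts (N K : R) : 2 <= K -> 5 * K ^+ 2 + 1 <= N ->
  K + 2 < lower_bound N K /\ (charS N K).[lower_bound N K] < 0.
Proof.
move=> K_ge2 N_large; have sqrK := double_le_sqr K_ge2.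
have a_gt0 : 0 < N + 2 * K - 3 by lra.
set t := 2 * (K ^+ 2 - K) / (N + 2 * K - 3).
have ta : t * (N + 2 * K - 3) = 2 * (K ^+ 2 - K) by rewrite mulfVK // gt_eqF.
have t_gt0 : 0 < t by rewrite divr_gt0 //; lra.
have t_lt1 : t < 1 by rewrite ltr_pdivrMr // mul1r; lra.
have -> : (charS N K).[lower_bound N K] = t ^+ 2 - t.
  rewrite charS_horner /lower_bound -/t.
  apply/eqP; rewrite -subr_eq0; apply/eqP.
  transitivity (2 * (K ^+ 2 - K) - t * (N + 2 * K - 3)); first by ring.
  by rewrite ta subrr.
by rewrite /lower_bound -/t; split; nra.
Qed.

(* With u = 2(K^2-K)/(N+2K+2) > 0, the upper bound is N+2K-2-u, charS takes
   there the positive value u^2 + 4u, and u(N+K-5) > K makes charSplus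
   positive as well. *)
Lemma upper_bound_facts (N K : R) : 2 <= K -> 5 * K ^+ 2 + 1 <= N ->
  0 < (charS N K).[upper_bound N K] /\ 0 < (charSplus N K).[upper_bound N K].
Proof.
move=> K_ge2 N_large; have sqrK := double_le_sqr K_ge2.
have b_gt0 : 0 < N + 2 * K + 2 by lra.
set u := 2 * (K ^+ 2 - K) / (N + 2 * K + 2).
have ub : u * (N + 2 * K + 2) = 2 * (K ^+ 2 - K) by rewrite mulfVK // gt_eqF.
have u_gt0 : 0 < u by rewrite divr_gt0 //; lra.
have charU : (charS N K).[upper_bound N K] = u ^+ 2 + 4 * u.
  rewrite charS_horner /upper_bound -/u.
  apply/eqP; rewrite -subr_eq0; apply/eqP.
  transitivity (2 * (K ^+ 2 - K) - u * (N + 2 * K + 2)); first by ring.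
  by rewrite ub subrr.
have key : K < u * (N + K - 5).
  have h1 : 2 * K * (N + K - 5) <= 2 * (K ^+ 2 - K) * (N + K - 5).
    by apply: ler_wpM2r; lra.
  have h2 : K * (N + 2 * K + 2) < 2 * K * (N + K - 5) by nra.
  have : K * (N + 2 * K + 2) < u * (N + K - 5) * (N + 2 * K + 2).
    by rewrite mulrAC ub; lra.
  by rewrite ltr_pM2r.
rewrite charSplus_horner charU /upper_bound -/u; split; nra.
Qed.

(* Since 2(K^2-K) > 0 and N+2K-3 < N+2K+2. *)
Lemma lower_lt_upper (N K : R) : 2 <= K -> 5 * K ^+ 2 + 1 <= N ->
  lower_bound N K < upper_bound N K.
Proof.
move=> K_ge2 N_large; have sqrK := double_le_sqr K_ge2.
rewrite /lower_bound /upper_bound ltrD2l ltrN2 ltr_pM2l ?ltf_pV2 ?posrE; lra.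
Qed.

End Estimates.

Lemma poly_root_between (R : rcfType) (p : {poly R}) (a b : R) :
  a <= b -> p.[a] < 0 -> 0 < p.[b] -> exists2 x, a < x < b & p.[x] = 0.
Proof.
move=> ab pa pb.
have signs : p.[a] <= 0 <= p.[b] by rewrite !ltW.
have [x /andP[ax xb] /eqP px] := poly_ivt ab signs.
exists x => //; apply/andP; split; rewrite lt_neqAle ?ax ?xb andbT.
- by apply: contraTneq pa => ->; rewrite px ltxx.
- by apply: contraTneq pb => <-; rewrite px ltxx.
Qed.

Theorem proposition1 (R : rcfType) (n k : nat) :
  (2 <= k)%N -> (5 * k ^ 2 < n)%N ->
  exists qplus q : R,
    is_largest_eigenvalue (signless_laplacian R (Splus_adj n k)) qplus /\
    is_largest_eigenvalue (signless_laplacian R (S_adj n k)) q /\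
    n%:R + 2 * k%:R - 2 - 2 * (k%:R ^+ 2 - k%:R) / (n%:R + 2 * k%:R + 2) > qplus /\
    qplus > q /\
    q > n%:R + 2 * k%:R - 2 - 2 * (k%:R ^+ 2 - k%:R) / (n%:R + 2 * k%:R - 3).
Proof.
move=> k_ge2 n_large.
have K_ge2 : 2 <= k%:R :> R by rewrite (ler_nat R 2 k).
have N_large : 5 * k%:R ^+ 2 + 1 <= n%:R :> R.
  have : ((5 * k ^ 2).+1)%:R <= n%:R :> R by rewrite ler_nat.
  by rewrite -addn1 natrD natrM natrX.
have [KL charL] := lower_bound_facts K_ge2 N_large.
have [charU charplusU] := upper_bound_facts K_ge2 N_large.
have [q /andP[Lq qU] charq] :=
  poly_root_between (ltW (lower_lt_upper K_ge2 N_large)) charL charU.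
have charplusq : (charSplus n%:R k%:R).[q] < 0.
  by rewrite charSplus_horner charq mulr0 sub0r oppr_lt0; lra.
have [qp /andP[qqp qpU] charqp] :=
  poly_root_between (ltW qU) charplusq charplusU.
exists qp, q; split; [|split; [|by split; [|split]]].
- by apply: Splus_largest_eigenvalue charqp; [lia | nia | lra].
- by apply: S_largest_eigenvalue charq; [lia | nia | lra].
Qed.
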